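(* Let $\mathcal{A}_1$ and $\mathcal{A}_2$ be deterministic timed automata over the same alphabet and the same clock set. If $\mathscr{L}_r(\mathcal{A}_1)=\mathscr{L}_r(\mathcal{A}_2)$, then $\mathcal{L}(\mathcal{A}_1)=\mathcal{L}(\mathcal{A}_2)$.
   Context: Let $\Sigma$ be a finite alphabet and $\mathcal{C}=\{c_1,\dots,c_m\}$ a finite set of clocks. A clock constraint is a finite conjunction of atomic constraints $c\sim k$ ($c\in\mathcal{C}$, $k\in\mathbb{N}$, ${\sim}\in\{<,\le,=,\ge,>\}$). A timed automaton is $\mathcal{A}=(\Sigma,L,l_0,F,\mathcal{C},\Delta)$ with finite location set $L$, initial $l_0$, accepting $F\subseteq L$, transitions $\Delta\subseteq L\times\Sigma\times\Phi(\mathcal{C})\times2^{\mathcal{C}}\times L$. A run over a delay-timed word $\omega=(\sigma_1,t_1)\cdots(\sigma_n,t_n)\in(\Sigma\times\mathbb{R}_{\ge0})^*$ is $(l_0,\nu_0)\xrightarrow{t_1,\sigma_1}\cdots\xrightarrow{t_n,\sigma_n}(l_n,\nu_n)$ with $\nu_0\equiv0$ and transitions $(l_{i-1},\sigma_i,\phi_i,\mathcal{B}_i,l_i)\in\Delta$ such that $\nu_{i-1}+t_i$ satisfies $\phi_i$ and $\nu_i$ is $\nu_{i-1}+t_i$ with the clocks of $\mathcal{B}_i$ set to $0$; it is accepting if $l_n\in F$. The timed language $\mathcal{L}(\mathcal{A})$ is the set of delay-timed words having an accepting run. $\mathcal{A}$ is a deterministic timed automaton if every delay-timed word has at most one run.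 The reset-clocked word of such a run is $(\sigma_1,\mathbf{v}_1,\mathbf{b}_1)\cdots(\sigma_n,\mathbf{v}_n,\mathbf{b}_n)$ with $\mathbf{v}_i=\nu_{i-1}+t_i\in\mathbb{R}_{\ge0}^m$ and $\mathbf{b}_{i}\in\{\top,\bot\}^m$, $\mathbf{b}_{i,j}=\top$ iff $c_j\in\mathcal{B}_i$; the reset-clocked language $\mathscr{L}_r(\mathcal{A})$ is the set of reset-clocked words of accepting runs of $\mathcal{A}$. *)

From mathcomp Require Import all_boot.
From Stdlib Require Import Reals List.
Set Implicit Arguments.
Unset Strict Implicit.
Unset Printing Implicit Defensive.

Definition valuation (m : nat) := 'I_m -> R.

Definition zero_val (m : nat) : valuation m := fun _ => 0%R.

Inductive cmp := CLt | CLe | CEq | CGe | CGt.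

Record atom (m : nat) := Atom { a_clock : 'I_m; a_cmp : cmp; a_const : nat }.

Definition constr (m : nat) := list (atom m).

Definition sat_atom (m : nat) (v : valuation m) (a : atom m) : Prop :=
  let x := v (a_clock a) in
  let k := INR (a_const a) in
  match a_cmp a with
  | CLt => (x < k)%R
  | CLe => (x <= k)%R
  | CEq => x = k
  | CGe => (x >= k)%R
  | CGt => (x > k)%R
  end.

Definition sat (m : nat) (v : valuation m) (phi : constr m) : Prop :=
  forall a, In a phi -> sat_atom v a.

Record trans (Sigma : finType) (m : nat) (L : finType) := Trans {
  t_src : L; t_sym : Sigma; t_guard : constr m; t_reset : {set 'I_m}; t_dst : L }.

Record TA (Sigma : finType) (m : nat) (L : finType) := MkTA {
  ta_init : L;
  ta_final : {set L};
  ta_delta : list (trans Sigma m L) }.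

(* delay-timed words *)
Definition dword (Sigma : finType) := list (Sigma * R).

Definition nonneg_delays (Sigma : finType) (w : dword Sigma) : Prop :=
  forall p, In p w -> (0 <= snd p)%R.

Definition delay (m : nat) (nu : valuation m) (t : R) : valuation m :=
  fun c => (nu c + t)%R.

Definition reset_val (m : nat) (v : valuation m) (B : {set 'I_m}) : valuation m :=
  fun c => if c \in B then 0%R else v c.

Inductive is_run (Sigma : finType) (m : nat) (L : finType) (A : TA Sigma m L) :
  L -> valuation m -> dword Sigma -> list (trans Sigma m L) -> L -> valuation m -> Prop :=
| run_nil : forall l nu, is_run A l nu nil nil l nu
| run_cons : forall l nu s t w tr trs l' nu',
    In tr (ta_delta A) -> t_src tr = l -> t_sym tr = s ->
    sat (delay nu t) (t_guard tr) ->
    is_run A (t_dst tr) (reset_val (delay nu t) (t_reset tr)) w trs l' nu' ->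
    is_run A l nu ((s, t) :: w) (tr :: trs) l' nu'.

Definition timed_lang (Sigma : finType) (m : nat) (L : finType) (A : TA Sigma m L)
  (w : dword Sigma) : Prop :=
  nonneg_delays w /\
  exists trs l' nu', is_run A (ta_init A) (@zero_val m) w trs l' nu' /\ l' \in ta_final A.

(* deterministic: every delay-timed word has at most one run (from the initial
   configuration); a run is determined by its sequence of transitions. *)
Definition deterministic (Sigma : finType) (m : nat) (L : finType) (A : TA Sigma m L) : Prop :=
  forall w trs1 trs2 l1 l2 nu1 nu2,
    nonneg_delays w ->
    is_run A (ta_init A) (@zero_val m) w trs1 l1 nu1 ->
    is_run A (ta_init A) (@zero_val m) w trs2 l2 nu2 ->
    trs1 = trs2.

(* reset-clocked words: letters (sigma, v, b) with v in R^m and b in {T,F}^m *)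
Definition rcword (Sigma : finType) (m : nat) := list (Sigma * valuation m * ('I_m -> bool)).

Fixpoint rc_of_run (Sigma : finType) (m : nat) (L : finType) (nu : valuation m)
  (w : dword Sigma) (trs : list (trans Sigma m L)) : rcword Sigma m :=
  match w, trs with
  | (s, t) :: w', tr :: trs' =>
      (s, delay nu t, fun j => j \in t_reset tr)
        :: rc_of_run (reset_val (delay nu t) (t_reset tr)) w' trs'
  | _, _ => nil
  end.

Definition rc_lang (Sigma : finType) (m : nat) (L : finType) (A : TA Sigma m L)
  (rw : rcword Sigma m) : Prop :=
  exists w trs l' nu',
    nonneg_delays w /\ is_run A (ta_init A) (@zero_val m) w trs l' nu' /\
    l' \in ta_final A /\ rw = rc_of_run (@zero_val m) w trs.

From mathcomp Require Import all_boot.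
From Stdlib Require Import Reals List.

Set Implicit Arguments.
Unset Strict Implicit.
Unset Printing Implicit Defensive.

(* A run sees its delays only through the clock values [delay nu t], and the
   reset-clocked word records exactly these values and the reset sets.  Hence
   any run of A2 whose reset-clocked word is that of an accepting run of A1
   over w can be replayed, transition by transition, over w itself. *)

Lemma is_run_size (Sigma : finType) (m : nat) (L : finType) (A : TA Sigma m L)
    l nu w trs l' nu' :
  is_run A l nu w trs l' nu' -> size w = size trs.
Proof. by elim=> //= *; congr S. Qed.

Lemma is_run_of_rc_eq (Sigma : finType) (m : nat) (L : finType) (A : TA Sigma m L)
    (L0 : finType) l nu w' trs' l' nu' :
  is_run A l nu w' trs' l' nu' ->
  forall w (trs : list (trans Sigma m L0)), size w = size trs ->
  rc_of_run nu w trs = rc_of_run nu w' trs' ->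
  exists nu'', is_run A l nu w trs' l' nu''.
Proof.
elim=> {l nu w' trs' l' nu'} [l nu | l nu s' t' w' tr' trs' l' nu' Hin Hsrc Hsym Hsat _ IH].
  by case=> [|[s t] w] [|tr trs] //= _ _; exists nu; constructor.
case=> [|[s t] w] [|tr trs] //= [Hsize] [-> Hdelay Hreset Hrest].
have Ereset : t_reset tr = t_reset tr'.
  by apply/setP=> j; exact: (congr1 (fun f => f j) Hreset).
rewrite Hdelay Ereset in Hrest.
have [nu'' Hrun] := IH _ _ Hsize Hrest.
by exists nu''; apply: run_cons; rewrite ?Hdelay.
Qed.

Lemma timed_lang_sub_of_rc_lang_sub (Sigma : finType) (m : nat) (L1 L2 : finType)
    (A1 : TA Sigma m L1) (A2 : TA Sigma m L2) :
  (forall rw, rc_lang A1 rw -> rc_lang A2 rw) ->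
  forall w, timed_lang A1 w -> timed_lang A2 w.
Proof.
move=> Hsub w [Hnn [trs1 [l1 [nu1 [Hrun1 Hfin1]]]]].
have [w' [trs2 [l2 [nu2 [_ [Hrun2 [Hfin2 Hrc]]]]]]] :
    rc_lang A2 (rc_of_run (@zero_val m) w trs1).
  by apply: Hsub; exists w, trs1, l1, nu1.
have [nu Hrun] := is_run_of_rc_eq Hrun2 (is_run_size Hrun1) Hrc.
by split=> //; exists trs2, l2, nu.
Qed.

Theorem theorem4p1 (Sigma : finType) (m : nat) (L1 L2 : finType)
  (A1 : TA Sigma m L1) (A2 : TA Sigma m L2) :
  deterministic A1 -> deterministic A2 ->
  (forall rw, rc_lang A1 rw <-> rc_lang A2 rw) ->
  (forall w, timed_lang A1 w <-> timed_lang A2 w).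
Proof.
move=> _ _ Heq w.
by split; apply: timed_lang_sub_of_rc_lang_sub => rw; case: (Heq rw).
Qed.
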